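(* Let $n,k,l$ be positive integers with $1\le l\le k$ and $l\le n-k$. Then for every $x\in[0,1)$, $$\frac{1-\sum_{i=1}^{l}\binom{n-k}{l-i}x^{(n-k)-(l-i)}(1-x)^{l-i}}{1-\sum_{i=1}^{l}\binom{n}{l-i}x^{n-(l-i)}(1-x)^{l-i}}\ \ge\ \frac{\binom{n-k}{l}}{\binom{n}{l}}.$$
   Context: $\binom{m}{j}$ denotes the binomial coefficient. *)

From mathcomp Require Import all_boot all_order all_algebra.
Set Implicit Arguments. Unset Strict Implicit. Unset Printing Implicit Defensive.
Import Order.TTheory GRing.Theory Num.Theory.
Local Open Scope ring_scope.

Definition tailsum (R : realFieldType) (m l : nat) (x : R) : R :=
  \sum_(1 <= i < l.+1) ('C(m, l - i))%:R * x ^+ (m - (l - i)) * (1 - x) ^+ (l - i).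

(* Let [S m] be the probability of at least [l] failures in [m] Bernoulli
   trials with failure probability [1 - x]; the quotients in the statement
   are [S (n - k) / S n] and [C(n-k, l) / C(n, l)], so it suffices that
   [S m / C(m, l)] is nonincreasing in [m >= l].  Now
   [S (m+1) = S m + C(m, l-1) x^(m-l+1) (1-x)^l] (trial [m+1] is the [l]-th
   failure), and [C(m, l) x^(m-l+1) (1-x)^l <= S m] (it is [x] times the
   probability of exactly [l] failures), hence
   [C(m, l) S (m+1) <= (C(m, l) + C(m, l-1)) S m = C(m+1, l) S m]. *)
From mathcomp Require Import all_boot all_order all_algebra.
From mathcomp Require Import zify ring.
Set Implicit Arguments. Unset Strict Implicit. Unset Printing Implicit Defensive.
Import Order.TTheory GRing.Theory Num.Theory.
Local Open Scope ring_scope.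

Lemma binr_gt0 (R : numDomainType) (m j : nat) : (j <= m)%N -> 0 < ('C(m, j))%:R :> R.
Proof. by move=> le_jm; rewrite ltr0n bin_gt0. Qed.

Definition bin_cdf {R : comPzRingType} (m L : nat) (x : R) : R :=
  \sum_(j < L.+1) ('C(m, j))%:R * x ^+ (m - j) * (1 - x) ^+ j.

Lemma tailsum_bin_cdf (R : realFieldType) (m L : nat) (x : R) :
  tailsum m L.+1 x = bin_cdf m L x.
Proof.
rewrite /tailsum big_add1 /= big_mkord (reindex_inj rev_ord_inj) /=.
apply: eq_bigr => i _.
by have -> : (L.+1 - (L.+1 - i.+1).+1 = i)%N by have := ltn_ord i; lia.
Qed.

Section BinCdf.
Variables (R : comPzRingType) (L : nat) (x : R).

Lemma bin_cdf_diag : bin_cdf L L x = 1.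
Proof.
have := exprDn x (1 - x) L; rewrite addrC subrK expr1n => ->.
by apply: eq_bigr => i _; rewrite -mulrA mulr_natl.
Qed.

(* Split the first [L.+1] terms of [bin_cdf m.+1 L x] by Pascal's rule and
   compare with [x * bin_cdf m L x + (1 - x) * bin_cdf m L x]. *)
Lemma bin_cdfS m :
  bin_cdf m.+1 L x = bin_cdf m L x - ('C(m, L))%:R * x ^+ (m - L) * (1 - x) ^+ L.+1.
Proof.
set y := 1 - x; set T := bin_cdf m L x.
set A := \sum_(i < L) ('C(m, i.+1))%:R * x ^+ (m - i) * y ^+ i.+1.
set B := \sum_(i < L) ('C(m, i))%:R * x ^+ (m - i) * y ^+ i.+1.
have pascal : bin_cdf m.+1 L x = x ^+ m.+1 + (A + B).
  rewrite /bin_cdf big_ord_recl /= bin0 subn0 expr0 mul1r mulr1 -big_split /=.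
  congr (_ + _); apply: eq_bigr => i _.
  by rewrite binS natrD subSS mulrDl mulrDl /bump /= ?add1n.
have xT : x * T = x ^+ m.+1 + A.
  rewrite /T /bin_cdf big_ord_recl mulrDr mulr_sumr /= bin0 subn0 expr0 mul1r.
  rewrite mulr1 -exprS; congr (_ + _); apply: eq_bigr => i _; rewrite /bump /=.
  have [ltim|leim] := ltnP i m.
    have -> : (m - i = (m - i.+1).+1)%N by lia.
    by rewrite [x ^+ (m - i.+1).+1]exprS !mulrA [x * _]mulrC.
  by rewrite bin_small ?ltnS // mulr0n !mul0r mulr0.
have yT : y * T = B + ('C(m, L))%:R * x ^+ (m - L) * y ^+ L.+1.
  rewrite /T /bin_cdf big_ord_recr mulrDr mulr_sumr /=.
  by congr (_ + _); [apply: eq_bigr => i _|]; rewrite exprS; ring.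
have -> : T = x * T + y * T by rewrite -mulrDl /y addrC subrK mul1r.
by rewrite pascal xT yT; ring.
Qed.

End BinCdf.

Section UpperTail.
Variables (R : realFieldType) (L : nat) (x : R).
Hypotheses (x_ge0 : 0 <= x) (x_lt1 : x < 1).

Let S m := 1 - bin_cdf m L x.
Let D m := ('C(m, L))%:R * x ^+ (m - L) * (1 - x) ^+ L.+1.

Let y_gt0 : 0 < 1 - x. Proof. by rewrite subr_gt0. Qed.

Let term_ge0 c m : 0 <= c%:R * x ^+ m * (1 - x) ^+ L.+1.
Proof. by rewrite !mulr_ge0 ?ler0n ?exprn_ge0 // ltW. Qed.

Lemma upper_tailS m : S m.+1 = S m + D m.
Proof. by rewrite /S /D bin_cdfS; ring. Qed.

Lemma upper_tail_ge m :
  (L <= m)%N -> ('C(m, L.+1))%:R * x ^+ (m - L) * (1 - x) ^+ L.+1 <= S m.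
Proof.
have upper_tail_diag : S L = 0 by rewrite /S bin_cdf_diag subrr.
elim: m => [|m IH].
  by rewrite leqn0 => /eqP <-; rewrite bin_small // !mul0r upper_tail_diag.
rewrite leq_eqVlt => /predU1P [<-|ltLm].
  by rewrite bin_small // !mul0r upper_tail_diag.
have {}IH := IH ltLm; rewrite upper_tailS /D binS natrD.
have -> : (m.+1 - L = (m - L).+1)%N by lia.
set c1 := ('C(m, L.+1))%:R in IH *; set c2 := ('C(m, L))%:R.
set p := x ^+ (m - L) in IH *; set q := (1 - x) ^+ L.+1 in IH *.
have -> : (c1 + c2) * x ^+ (m - L).+1 * q = x * (c1 * p * q + c2 * p * q).
  by rewrite exprS /p; ring.
have c12_ge0 : 0 <= c1 * p * q + c2 * p * q by rewrite addr_ge0 ?term_ge0.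
by apply: le_trans (ler_piMl c12_ge0 (ltW x_lt1)) _; rewrite lerD2r.
Qed.

Lemma upper_tail_gt0 m : (L < m)%N -> 0 < S m.
Proof.
elim: m => // m IH; rewrite ltnS leq_eqVlt => /predU1P [<-|ltLm].
  rewrite upper_tailS /S /D bin_cdf_diag subrr add0r subnn expr0 mulr1 binn.
  by rewrite mul1r exprn_gt0.
by rewrite upper_tailS; apply: lt_le_trans (IH ltLm) _; rewrite lerDl term_ge0.
Qed.

Lemma upper_tail_ratioS m : (L < m)%N ->
  S m.+1 / ('C(m.+1, L.+1))%:R <= S m / ('C(m, L.+1))%:R.
Proof.
move=> ltLm; have ltLm1 : (L < m.+1)%N by apply: ltnW.
rewrite ler_pdivrMr ?binr_gt0 // mulrAC ler_pdivlMr ?binr_gt0 //.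
have := ler_wpM2l (ler0n R 'C(m, L)) (upper_tail_ge (ltnW ltLm)).
rewrite upper_tailS /D binS natrD.
set c1 := ('C(m, L.+1))%:R; set c2 := ('C(m, L))%:R.
set p := x ^+ (m - L); set q := (1 - x) ^+ L.+1 => le_c2.
have -> : (S m + c2 * p * q) * c1 = S m * c1 + c2 * (c1 * p * q) by ring.
by rewrite mulrDr lerD2l [S m * c2]mulrC.
Qed.

Lemma upper_tail_ratio_nonincr m d : (L < m)%N ->
  S (m + d) / ('C(m + d, L.+1))%:R <= S m / ('C(m, L.+1))%:R.
Proof.
move=> ltLm; elim: d => [|d IH]; first by rewrite addn0.
rewrite addnS; apply: le_trans IH.
by apply: upper_tail_ratioS; rewrite ltn_addr.
Qed.

End UpperTail.

Theorem lemma6 (R : realFieldType) (n k l : nat) (x : R) :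
  (0 < n)%N -> (0 < k)%N -> (0 < l)%N -> (1 <= l <= k)%N -> (l <= n - k)%N ->
  0 <= x < 1 ->
  ('C(n - k, l))%:R / ('C(n, l))%:R
    <= (1 - tailsum (n - k) l x) / (1 - tailsum n l x).
Proof.
move=> _ _ l_gt0 /andP [_ le_lk] le_lnk /andP [x_ge0 x_lt1].
case: l l_gt0 le_lk le_lnk => // L _ ltLk ltLnk; rewrite !tailsum_bin_cdf.
have ltLn : (L < n)%N by lia.
have := upper_tail_ratio_nonincr x_ge0 x_lt1 k ltLnk.
rewrite subnK; last by lia.
rewrite ler_pdivrMr ?binr_gt0 // mulrAC ler_pdivlMr ?binr_gt0 // => ratio_le.
rewrite ler_pdivrMr ?binr_gt0 // mulrAC ler_pdivlMr ?(upper_tail_gt0 x_ge0 x_lt1) //.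
by rewrite mulrC.
Qed.
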